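(* Let $G$ be a connected bipartite graph whose bipartition classes have sizes $a\ge1$ and $b\ge1$, let $K$ be a finite field with $q$ elements, and let $X$ be the projective algebraic toric set parameterized by the edges of $G$. Let $X_1$, $X_2$, $X_3$ be the projective tori in $\mathbb{P}^{a-1}$, $\mathbb{P}^{b-1}$, $\mathbb{P}^{a+b-2}$ respectively. Then for every $d\ge1$, $$\delta_{X_1}(d)\,\delta_{X_2}(d)\le\delta_X(d)\le\delta_{X_3}(d).$$
   Context: For $Y$ a subset of the projective torus $\mathbb{T}^{N-1}=\{(y_1:\dots:y_N): y_i\neq0\}\subseteq\mathbb{P}^{N-1}$ over $K$, with $Y=\{P_1,\dots,P_m\}$, the code $C_Y(d)\subseteq K^m$ is the image of the space of degree-$d$ forms in $K[t_1,\dots,t_N]$ under $f\mapsto\big(f(P_1)/t_1^d(P_1),\dots,f(P_m)/t_1^d(P_m)\big)$, and $\delta_Y(d)$ is its minimum distance, i.e. the minimum number of nonzero coordinates of a nonzero vector of $C_Y(d)$. For a graph $G$ with vertices $\{1,\dots,n\}$ and edges $e_1,\dots,e_s$, the projective algebraic toric set parameterized by the edges of $G$ is the image $X\subseteq\mathbb{P}^{s-1}$ of $\mathbb{T}^{n-1}$ under the map whose $k$-th coordinate is $x_ix_j$ when $e_k=\{i,j\}$. *)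

From HB Require Import structures.
From mathcomp Require Import all_boot all_order all_algebra.
From mathcomp Require Import mpoly.
From Stdlib Require Import ClassicalEpsilon.
Set Implicit Arguments. Unset Strict Implicit. Unset Printing Implicit Defensive.
Import Order.TTheory GRing.Theory.
Local Open Scope ring_scope.

Section Codes.
Variable K : finFieldType.

(* Points of P^{N-1} are represented by vectors in K^N (coordinates 'I_N). *)

(* the coordinate t_1 (the first coordinate, index 0) of a vector *)
Definition firstc N (x : {ffun 'I_N -> K}) : K :=
  if @insub nat (fun k => (k < N)%N) 'I_N 0%N is Some i then x i else 0.

Definition proj_norm N (x : {ffun 'I_N -> K}) : {ffun 'I_N -> K} :=
  [ffun i => x i / firstc x].

(* The projective torus T^{N-1} in P^{N-1}: each point is represented by its
   unique representative with first coordinate 1. *)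
Definition torus N : {set {ffun 'I_N -> K}} :=
  [set x : {ffun 'I_N -> K} | [forall i, x i != 0] && (firstc x == 1)].

Definition classb (P : Prop) : bool :=
  if excluded_middle_informative P then true else false.

(* The evaluation vector of a form f on Y = {P_1,...,P_m}
   (P_k = k-th element of enum Y):  (f(P_k) / t_1^d(P_k))_k. *)
Definition evcode N (Y : {set {ffun 'I_N -> K}}) (d : nat) (f : {mpoly K[N]})
  : {ffun 'I_#|Y| -> K} :=
  [ffun k => let P : {ffun 'I_N -> K} := enum_val k in
             meval (fun i => P i) f / (firstc P) ^+ d].

Definition code N (Y : {set {ffun 'I_N -> K}}) (d : nat) : {set {ffun 'I_#|Y| -> K}} :=
  [set c | classb (exists f : {mpoly K[N]}, f \is d.-homog /\ c = evcode Y d f)].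

Definition hwt m (c : {ffun 'I_m -> K}) : nat := #|[set i | c i != 0]|.

(* Minimum distance delta_Y(d): minimum weight of a nonzero codeword
   (the default #|Y| is never smaller than any weight). *)
Definition delta N (Y : {set {ffun 'I_N -> K}}) (d : nat) : nat :=
  \big[minn/#|Y|]_(c in code Y d | c != 0) hwt c.

(* Edges {i,j} (i < j) of a graph on vertices 'I_n, listed in lexicographic
   order; this is e_1, ..., e_s. *)
Definition edge_list n (e : rel 'I_n) : seq ('I_n * 'I_n) :=
  [seq ij : 'I_n * 'I_n <- [seq (i, j) | i <- enum 'I_n, j <- enum 'I_n] |
     ((nat_of_ord ij.1 < nat_of_ord ij.2)%N && e ij.1 ij.2)].

Definition nedges n (e : rel 'I_n) : nat := size (edge_list e).

Definition edge_map n (e : rel 'I_n) (x : {ffun 'I_n -> K})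
  : {ffun 'I_(nedges e) -> K} :=
  [ffun k => x (tnth (in_tuple (edge_list e)) k).1 *
             x (tnth (in_tuple (edge_list e)) k).2].

Definition toric_set n (e : rel 'I_n) : {set {ffun 'I_(nedges e) -> K}} :=
  [set proj_norm (edge_map e x) | x in torus n].

End Codes.

Definition simple_graph n (e : rel 'I_n) : Prop :=
  (forall x y, e x y = e y x) /\ (forall x, e x x = false).

Definition connected_graph n (e : rel 'I_n) : Prop :=
  forall x y, connect e x y.

Definition bipartition n (e : rel 'I_n) (A : {set 'I_n}) : Prop :=
  forall x y, e x y -> (x \in A) != (y \in A).

From HB Require Import structures.
From mathcomp Require Import all_boot all_order all_algebra.
From mathcomp Require Import mpoly ring zify.
From Stdlib Require Import ClassicalEpsilon.
Set Implicit Arguments. Unset Strict Implicit. Unset Printing Implicit Defensive.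
Import Order.TTheory GRing.Theory.
Local Open Scope ring_scope.

(* Write a point of the torus T^{n-1} as z = (x, y), with x indexed by A and
   y by its complement, so that the edge monomials are the products x_a y_b.
   Since G is connected, the ratios z_v / z'_v are propagated along a spanning
   tree by the ratios of the edge monomials; hence (x, y) |-> (x_a y_b)_{ab} is
   a bijection T1 x T2 -> X, and restriction to the a + b - 1 edges of a
   spanning tree is a bijection X -> T3.
   Lower bound: if a form F of degree d is nonzero at some point of X, then
   G(x, y) = F((x_a y_b)_{ab}) is a form of degree d in x for fixed y and in y
   for fixed x; the product-code count gives at least delta1 * delta2 pairs
   (x, y) with G(x, y) != 0.
   Upper bound: a form on T3 pulled back along the tree restriction is a form of
   the same degree with as many nonzeros on X. *)

Section Forms.
Variable K : finFieldType.

Lemma classbP (P : Prop) : classb P = true <-> P.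
Proof. by rewrite /classb; case: excluded_middle_informative. Qed.

Lemma firstcE N (x : {ffun 'I_N -> K}) (i : 'I_N) : val i = 0%N -> firstc x = x i.
Proof.
move=> hi; rewrite /firstc; case: insubP => [j _ hj|].
  by congr (x _); apply: val_inj; rewrite hj hi.
by rewrite -hi ltn_ord.
Qed.

Lemma firstc_scale N (w : {ffun 'I_N -> K}) (c : K) :
  firstc [ffun i => w i * c] = firstc w * c.
Proof. by rewrite /firstc; case: insub => [i|]; rewrite ?ffunE ?mul0r. Qed.

Lemma firstc_neq0 N (w : {ffun 'I_N -> K}) :
  (0 < N)%N -> (forall i, w i != 0) -> firstc w != 0.
Proof. by move=> hN hw; rewrite (@firstcE _ _ (Ordinal hN)). Qed.

Lemma proj_normE N (w : {ffun 'I_N -> K}) k : proj_norm w k = w k / firstc w.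
Proof. by rewrite ffunE. Qed.

Lemma proj_norm_neq0 N (w : {ffun 'I_N -> K}) :
  (0 < N)%N -> (forall k, w k != 0) -> forall k, proj_norm w k != 0.
Proof. by move=> hN hw k; rewrite ffunE mulf_neq0 // invr_eq0 firstc_neq0. Qed.

Lemma proj_norm_torus N (w : {ffun 'I_N -> K}) :
  (0 < N)%N -> (forall i, w i != 0) -> proj_norm w \in torus K N.
Proof.
move=> hN hw; rewrite inE; apply/andP; split.
  by apply/forallP; apply: proj_norm_neq0.
by rewrite /proj_norm firstc_scale divff // firstc_neq0.
Qed.

Lemma proj_norm_scale N (w : {ffun 'I_N -> K}) (c : K) : c != 0 ->
  proj_norm [ffun i => w i * c] = proj_norm w.
Proof.
move=> hc; apply/ffunP => i; rewrite !ffunE firstc_scale.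
by rewrite invfM mulrACA divff // mulr1.
Qed.

Lemma proj_norm_eq_scale N (w w' : {ffun 'I_N -> K}) :
  proj_norm w = proj_norm w' -> firstc w != 0 -> firstc w' != 0 ->
  forall k, w k = (firstc w / firstc w') * w' k.
Proof.
move=> h hf hf' k; have := congr1 (fun f : {ffun _ -> K} => f k) h.
by rewrite /= !ffunE => hk; rewrite -[w k](divfK hf) hk; field; rewrite hf'.
Qed.

Lemma torus_neq0 N (x : {ffun 'I_N -> K}) i : x \in torus K N -> x i != 0.
Proof. by rewrite inE => /andP [/forallP h _]. Qed.

Lemma torus_firstc N (x : {ffun 'I_N -> K}) : x \in torus K N -> firstc x = 1.
Proof. by rewrite inE => /andP [_ /eqP]. Qed.

Lemma meval_homog_scale N d (f : {mpoly K[N]}) (v : 'I_N -> K) (c : K) :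
  f \is d.-homog -> meval (fun i => v i * c) f = meval v f * c ^+ d.
Proof.
move=> /dhomogP hf; rewrite !mevalE big_distrl /=.
rewrite big_seq [RHS]big_seq; apply: eq_bigr => m hm.
rewrite -mulrA; congr (_ * _).
have -> : \prod_i (v i * c) ^+ m i = \prod_i v i ^+ m i * \prod_i c ^+ m i.
  by rewrite -big_split /=; apply: eq_bigr => i _; rewrite exprMn.
rewrite prodrXr; congr (_ * _ ^+ _).
by have := hf m hm; rewrite /= mdegE.
Qed.

Lemma meval_proj_norm_neq0 N d (f : {mpoly K[N]}) (w : {ffun 'I_N -> K}) :
  f \is d.-homog -> firstc w != 0 ->
  (meval (fun i => proj_norm w i) f != 0) = (meval (fun i => w i) f != 0).
Proof.
move=> hf hw; rewrite (@meval_eq _ _ _ (fun i => w i * (firstc w)^-1)).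
  by rewrite (meval_homog_scale _ _ hf) mulf_eq0 expf_eq0 invr_eq0 (negbTE hw) andbF orbF.
by move=> i; rewrite ffunE.
Qed.

Lemma homog_comp_scaledX N M d (f : {mpoly K[N]}) (c : 'I_N -> K) (j : 'I_N -> 'I_M) :
  f \is d.-homog -> f \mPo [tuple c i *: 'X_(j i) | i < N] \is d.-homog.
Proof.
move=> /dhomogP hf; rewrite comp_mpolyEX big_seq.
apply: rpred_sum => m /= hm; apply: rpredZ.
have -> : d = (\sum_i m i)%N by have := hf m hm; rewrite /= mdegE.
rewrite comp_mpolyX /index_enum; elim: (Finite.enum _) => [|i r IH].
  by rewrite !big_nil dhomog1.
rewrite !big_cons; apply: dhomogM => //.
rewrite tnth_mktuple; have := @dhomogMn _ _ mdeg 1 (c i *: 'X_(j i)) (m i).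
by rewrite mul1n; apply; apply: dhomogZ; rewrite dhomogX /= mdeg1.
Qed.

Lemma meval_comp_scaledX N M (f : {mpoly K[N]}) (c : 'I_N -> K) (j : 'I_N -> 'I_M)
    (v : 'I_M -> K) :
  meval v (f \mPo [tuple c i *: 'X_(j i) | i < N]) = meval (fun i => c i * v (j i)) f.
Proof.
rewrite comp_mpoly_meval; apply: meval_eq => i.
by rewrite tnth_mktuple mevalZ mevalXU.
Qed.

Definition nzset N (Y : {set {ffun 'I_N -> K}}) (f : {mpoly K[N]}) :=
  [set P in Y | meval (fun i => P i) f != 0].

Lemma nzsetP N (Y : {set {ffun 'I_N -> K}}) f P :
  (P \in nzset Y f) = (P \in Y) && (meval (fun i => P i) f != 0).
Proof. by rewrite inE. Qed.

Definition normalized N (Y : {set {ffun 'I_N -> K}}) :=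
  forall P, P \in Y -> firstc P = 1.

Lemma torus_normalized N : normalized (torus K N).
Proof. by move=> P; apply: torus_firstc. Qed.

Lemma hwt_evcode N (Y : {set {ffun 'I_N -> K}}) d f : normalized Y ->
  hwt (evcode Y d f) = #|nzset Y f|.
Proof.
move=> hY; rewrite /hwt.
have -> : [set i | evcode Y d f i != 0] =
          [set i | meval (fun k => (enum_val i : {ffun 'I_N -> K}) k) f != 0].
  by apply/setP => i; rewrite !inE ffunE /= hY ?enum_valP // expr1n divr1.
set S := [set i | _].
have -> : nzset Y f = enum_val @: S.
  apply/setP => P; rewrite inE; apply/andP/imsetP => [[hP hf]|[i]].
    by exists (enum_rank_in hP P); rewrite ?inE enum_rankK_in.
  by rewrite inE => hi ->; rewrite enum_valP.
by rewrite card_imset //; apply: enum_val_inj.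
Qed.

Lemma delta_le_card N (Y : {set {ffun 'I_N -> K}}) d : (delta Y d <= #|Y|)%N.
Proof.
rewrite /delta; apply: (big_ind (fun k => k <= #|Y|)%N) => //.
  by move=> x y hx _; rewrite geq_min hx.
by move=> c _; rewrite /hwt; apply: leq_trans (max_card _) _; rewrite card_ord.
Qed.

Lemma delta_le_nzset N (Y : {set {ffun 'I_N -> K}}) d f : normalized Y ->
  f \is d.-homog -> (0 < #|nzset Y f|)%N -> (delta Y d <= #|nzset Y f|)%N.
Proof.
move=> hY hf hW; set c := evcode Y d f.
have hc : c \in code Y d by rewrite inE; apply/classbP; exists f.
have hc0 : c != 0.
  apply: contraTneq hW => h0; rewrite -(hwt_evcode d) // -/c h0 /hwt lt0n negbK.
  by apply/eqP; apply: eq_card0 => i; rewrite !inE ffunE eqxx.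
rewrite -(hwt_evcode d) // /delta.
have : c \in index_enum {ffun 'I_#|Y| -> K} by rewrite mem_index_enum.
elim: (index_enum _) => [//|x r IH]; rewrite inE big_cons => /orP [/eqP <-|/IH h].
  by rewrite hc hc0 /= geq_minl.
by case: ifP => _ //; rewrite geq_min h orbT.
Qed.

Lemma delta_ge_nzset N (Y : {set {ffun 'I_N -> K}}) d m :
  normalized Y -> (m <= #|Y|)%N ->
  (forall f, f \is d.-homog -> (0 < #|nzset Y f|)%N -> (m <= #|nzset Y f|)%N) ->
  (m <= delta Y d)%N.
Proof.
move=> hY hm hW; rewrite /delta; apply: (big_ind (fun k => m <= k)%N) => //.
  by move=> x y hx hy; rewrite leq_min hx.
move=> c /andP [hc hc0]; move: hc hc0; rewrite inE => /classbP [f [hf ->]] hc0.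
rewrite hwt_evcode //; apply: hW => //.
rewrite lt0n; apply: contraNneq hc0; rewrite -(hwt_evcode d) // => h.
apply/eqP/ffunP => i; rewrite [RHS]ffunE; apply/eqP; apply: contraT => hi.
have : (0 < hwt (evcode Y d f))%N.
  by rewrite /hwt; apply/card_gt0P; exists i; rewrite inE.
by rewrite h.
Qed.

End Forms.

Lemma card_dep_pairs_ge (T U : finType) (S : {set T}) (F : T -> {set U}) m1 m2 :
  (m2 <= #|S|)%N -> (forall y, y \in S -> m1 <= #|F y|)%N ->
  (m1 * m2 <= #|[set yx : T * U | (yx.1 \in S) && (yx.2 \in F yx.1)]|)%N.
Proof.
move=> hS hF; rewrite -sum1_card.
rewrite (eq_bigl (fun yx => (yx.1 \in S) && (yx.2 \in F yx.1))); last first.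
  by move=> yx; rewrite inE.
rewrite -(pair_big_dep (fun y => y \in S) (fun y x => x \in F y) (fun _ _ => 1%N)) /=.
apply: leq_trans (leq_mul (leqnn _) hS) _.
rewrite mulnC -sum_nat_const; apply: leq_sum => y hy.
by rewrite sum1_card; apply: hF.
Qed.

Section EdgeList.
Variables (n : nat) (e : rel 'I_n).

Definition edge_fst (k : 'I_(nedges e)) := (tnth (in_tuple (edge_list e)) k).1.
Definition edge_snd (k : 'I_(nedges e)) := (tnth (in_tuple (edge_list e)) k).2.

Lemma edge_mapE (K : finFieldType) z k :
  edge_map e z k = z (edge_fst k) * z (edge_snd k) :> K.
Proof. by rewrite ffunE. Qed.

Lemma edge_map_neq0 (K : finFieldType) (z : {ffun 'I_n -> K}) :
  (forall v, z v != 0) -> forall k, edge_map e z k != 0.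
Proof. by move=> hz k; rewrite edge_mapE mulf_neq0. Qed.

Lemma edge_map_scale (K : finFieldType) (z : {ffun 'I_n -> K}) c :
  edge_map e [ffun v => z v * c] = [ffun k => edge_map e z k * c ^+ 2].
Proof. by apply/ffunP => k; rewrite !ffunE mulrACA expr2. Qed.

Lemma edge_rel k : e (edge_fst k) (edge_snd k).
Proof.
have := mem_tnth k (in_tuple (edge_list e)).
by rewrite /edge_list mem_filter => /andP [/andP [_ h] _].
Qed.

Lemma edge_index u v : simple_graph e -> e u v -> exists k,
  (edge_fst k = u /\ edge_snd k = v) \/ (edge_fst k = v /\ edge_snd k = u).
Proof.
case=> hsym hirr.
wlog huv : u v / (nat_of_ord u < nat_of_ord v)%N.
  move=> W huv; case: (ltngtP u v) => h.
  - exact: W.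
  - by have [|k hk] := W v u h; [rewrite hsym | exists k; tauto].
  - by move: huv; rewrite (val_inj h) hirr.
move=> huv'.
have hm : (u, v) \in edge_list e.
  rewrite /edge_list mem_filter /= huv huv' /=.
  by apply/allpairsP; exists (u, v); rewrite !mem_enum.
have hi : (index (u, v) (edge_list e) < nedges e)%N by rewrite index_mem.
exists (Ordinal hi); left.
by rewrite /edge_fst /edge_snd (tnth_nth (u, v)) /= nth_index.
Qed.

End EdgeList.

Arguments edge_map_neq0 {n e K z}.

Section SpanningTree.
Variables (n : nat) (e : rel 'I_n).
Hypotheses (He : simple_graph e) (Hconn : connected_graph e).
Variable r0 : 'I_n.

Lemma path_exit_edge (s : seq 'I_n) p x : path e x p -> x \in s -> last x p \notin s ->
  exists u v, [/\ u \in s, v \notin s & e u v].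
Proof.
elim: p x => [|y p IH] x /=; first by move=> _ ->.
case/andP => hxy hp hx hl; case: (boolP (y \in s)) => hy.
  exact: IH hp hy hl.
by exists x, y.
Qed.

(* A tree on m vertices listed as s_0 = r0, s_1, ...; the parent of s_j is s_(p j). *)
Lemma spanning_subtree m : (0 < m <= n)%N -> exists (s : seq 'I_n) (p : nat -> nat),
  [/\ uniq s, size s = m, nth r0 s 0 = r0 &
      forall j, (0 < j < m)%N -> (p j < j)%N /\ e (nth r0 s j) (nth r0 s (p j))].
Proof.
elim: m => [|m IH] //; move=> /andP [_ hm]; case: (posnP m) => [->|hm0].
  exists [:: r0], (fun _ => 0%N); split => //.
  by move=> j /andP [h1 h2]; case: j h1 h2 => [|[]].
have [|s [p [hu hs h0 hp]]] := IH; first by rewrite hm0 ltnW.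
have [w hw] : exists w, w \notin s.
  case: (pickP (fun w => w \notin s)) => [w hw|hall]; first by exists w.
  have := uniq_leq_size (enum_uniq 'I_n) (s2 := s).
  rewrite size_enum_ord hs => h; have := h (fun w _ => negbFE (hall w)).
  by rewrite leqNgt hm.
have hr0 : r0 \in s by rewrite -h0 mem_nth // hs.
have /connectP [q hq hl] := Hconn r0 w.
have [|u [v [hu' hv huv]]] := path_exit_edge hq hr0; first by rewrite -hl.
exists (rcons s v), (fun j => if j == m then index u s else p j); split.
- by rewrite rcons_uniq hv hu.
- by rewrite size_rcons hs.
- by rewrite nth_rcons hs hm0.
move=> j /andP [hj0 hj]; case: eqP => [->|/eqP hjm].
  have hi : (index u s < m)%N by rewrite -hs index_mem.
  split => //.
  rewrite !nth_rcons hs ltnn eqxx hi (nth_index r0 hu').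
  by case: He => hsym _; rewrite hsym.
have hjm' : (j < m)%N by rewrite ltn_neqAle hjm -ltnS.
have [|hpj hej] := hp j; first by rewrite hj0 hjm'.
by rewrite !nth_rcons hs hjm' (ltn_trans hpj hjm').
Qed.

Lemma spanning_tree N : N = n.-1 -> (0 < n)%N ->
  exists (s : nat -> 'I_n) (p : nat -> nat) (tr : 'I_N -> 'I_(nedges e)),
  [/\ s 0%N = r0, (forall v, exists2 j, (j < n)%N & v = s j),
      (forall j, (0 < j < n)%N -> (p j < j)%N) &
      forall k : 'I_N,
        (edge_fst (tr k) = s k.+1 /\ edge_snd (tr k) = s (p k.+1)) \/
        (edge_fst (tr k) = s (p k.+1) /\ edge_snd (tr k) = s k.+1)].
Proof.
move=> hN hn; have [|s [p [hu hs h0 hp]]] := @spanning_subtree n.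
  by rewrite hn leqnn.
have hk (k : 'I_N) : (0 < k.+1 < n)%N.
  by rewrite /= -(prednK hn) ltnS -hN ltn_ord.
have [tr htr] : exists tr : 'I_N -> 'I_(nedges e), forall k,
    (edge_fst (tr k) = nth r0 s k.+1 /\ edge_snd (tr k) = nth r0 s (p k.+1)) \/
    (edge_fst (tr k) = nth r0 s (p k.+1) /\ edge_snd (tr k) = nth r0 s k.+1).
  apply: (@fin_all_exists _ (fun _ => 'I_(nedges e)) (fun (k : 'I_N) t =>
    (edge_fst t = nth r0 s k.+1 /\ edge_snd t = nth r0 s (p k.+1)) \/
    (edge_fst t = nth r0 s (p k.+1) /\ edge_snd t = nth r0 s k.+1))) => k.
  have [_ hek] := hp _ (hk k).
  by have [t ht] := edge_index He hek; exists t; tauto.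
exists (nth r0 s), p, tr; split => //.
- move=> v; have hv : v \in s.
    apply: contraT => hv; have /card_uniqP hc : uniq (v :: s) by rewrite /= hv hu.
    by have := max_card (mem (v :: s)); rewrite hc /= hs card_ord ltnn.
  exists (index v s); last by rewrite nth_index.
  by move: hv; rewrite -index_mem hs.
- by move=> j hj; case: (hp j hj).
Qed.

End SpanningTree.

Section BipartiteToricSet.
Variables (K : finFieldType) (n : nat) (e : rel 'I_n) (A : {set 'I_n}).
Hypotheses (Hbip : bipartition e A) (hA : (0 < #|A|)%N) (hB : (0 < #|~: A|)%N).

Definition a0 : 'I_n := enum_val (Ordinal hA : 'I_#|A|).
Definition b0 : 'I_n := enum_val (Ordinal hB : 'I_#|~: A|).
Lemma a0_in : a0 \in A. Proof. exact: enum_valP. Qed.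
Lemma b0_in : b0 \in ~: A. Proof. exact: enum_valP. Qed.
Definition rankA v : 'I_#|A| := enum_rank_in a0_in v.
Definition rankB v : 'I_#|~: A| := enum_rank_in b0_in v.

Definition glue (x : {ffun 'I_#|A| -> K}) (y : {ffun 'I_#|~: A| -> K})
  : {ffun 'I_n -> K} :=
  [ffun v => if v \in A then x (rankA v) else y (rankB v)].

Lemma glueA x y v : v \in A -> glue x y v = x (rankA v).
Proof. by rewrite ffunE => ->. Qed.

Lemma glueB x y v : v \notin A -> glue x y v = y (rankB v).
Proof. by rewrite ffunE => /negbTE ->. Qed.

Lemma glue_enumA x y (i : 'I_#|A|) : glue x y (enum_val i) = x i.
Proof. by rewrite glueA ?enum_valP // /rankA enum_valK_in. Qed.

Lemma glue_enumB x y (i : 'I_#|~: A|) : glue x y (enum_val i) = y i.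
Proof.
by have := enum_valP i; rewrite inE => h; rewrite glueB // /rankB enum_valK_in.
Qed.

Notation T1 := (torus K #|A|).
Notation T2 := (torus K #|~: A|).
Notation N3 := (#|A| + #|~: A| - 1)%N.
Notation T3 := (torus K N3).
Notation X := (toric_set K e).

Lemma glue_neq0 x y v : x \in T1 -> y \in T2 -> glue x y v != 0.
Proof. by move=> hx hy; rewrite ffunE; case: ifP => _; apply: torus_neq0. Qed.

Lemma glue_a0_b0 x y : x \in T1 -> y \in T2 -> glue x y a0 = 1 /\ glue x y b0 = 1.
Proof.
move=> hx hy; rewrite /a0 /b0 glue_enumA glue_enumB.
by rewrite -!firstcE // !torus_firstc.
Qed.

Definition edge_A (k : 'I_(nedges e)) := if edge_fst k \in A then edge_fst k else edge_snd k.
Definition edge_B (k : 'I_(nedges e)) := if edge_fst k \in A then edge_snd k else edge_fst k.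

Lemma edge_A_in k : edge_A k \in A.
Proof.
have := Hbip (edge_rel k); rewrite /edge_A.
by case h: (edge_fst k \in A); rewrite ?h //; case: (edge_snd k \in A).
Qed.

Lemma edge_B_notin k : edge_B k \notin A.
Proof.
have := Hbip (edge_rel k); rewrite /edge_B.
by case h: (edge_fst k \in A); rewrite ?h //; case: (edge_snd k \in A).
Qed.

Lemma edge_mapAB (z : {ffun 'I_n -> K}) k :
  edge_map e z k = z (edge_A k) * z (edge_B k).
Proof. by rewrite edge_mapE /edge_A /edge_B; case: ifP => _ //; rewrite mulrC. Qed.

Lemma N3_pred : N3 = n.-1.
Proof. by rewrite cardsC card_ord subn1. Qed.

Lemma N3_gt0 : (0 < N3)%N.
Proof. by rewrite subn_gt0; exact: (leq_add hA hB). Qed.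

Lemma n_gt0 : (0 < n)%N.
Proof. exact: (leq_ltn_trans (leq0n _) (ltn_ord a0)). Qed.

Variables (s : nat -> 'I_n) (p : nat -> nat) (tr : 'I_N3 -> 'I_(nedges e)).
Hypotheses (hs0 : s 0%N = a0) (hcov : forall v, exists2 j, (j < n)%N & v = s j)
  (hp : forall j, (0 < j < n)%N -> (p j < j)%N)
  (htr : forall k : 'I_N3,
     (edge_fst (tr k) = s k.+1 /\ edge_snd (tr k) = s (p k.+1)) \/
     (edge_fst (tr k) = s (p k.+1) /\ edge_snd (tr k) = s k.+1)).

Lemma nedges_gt0 : (0 < nedges e)%N.
Proof. exact: (leq_ltn_trans (leq0n _) (ltn_ord (tr (Ordinal N3_gt0)))). Qed.

(* Along a tree edge uv, z_u z_v = c z'_u z'_v turns the ratio r = z/z' at one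
   end into c / r at the other; bipartiteness makes the result depend only on
   the side of v. *)
Lemma tree_ratio (z z' : {ffun 'I_n -> K}) (c : K) :
  (forall v, z v != 0) -> (forall v, z' v != 0) ->
  (forall k : 'I_N3, edge_map e z (tr k) = c * edge_map e z' (tr k)) ->
  forall v, z v / z' v = (if v \in A then z a0 / z' a0 else c / (z a0 / z' a0)).
Proof.
move=> hz hz' hc.
suff H m j : (j <= m)%N -> (j < n)%N ->
    z (s j) / z' (s j) = (if s j \in A then z a0 / z' a0 else c / (z a0 / z' a0)).
  by move=> v; have [i hi ->] := hcov v; exact: (H i i (leqnn i) hi).
elim: m j => [|m IH] j hjm hjn; case: (posnP j) => [->|hj0]; rewrite ?hs0 ?a0_in //.
  by move: hjm; rewrite leqn0 => /eqP h; move: hj0; rewrite h.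
have hpj : (p j < j)%N by apply: hp; rewrite hj0 hjn.
have IHp := IH (p j) (leq_trans hpj hjm) (ltn_trans hpj hjn).
have hkN : (j.-1 < N3)%N by rewrite N3_pred; lia.
set k := Ordinal hkN; have hkj : k.+1 = j by rewrite /= prednK.
have hck := hc k; rewrite !edge_mapE in hck.
have hee := edge_rel (tr k).
have [huw hb] : z (s j) * z (s (p j)) = c * (z' (s j) * z' (s (p j))) /\
                (s j \in A) != (s (p j) \in A).
  case: (htr k) => [[h1 h2]|[h1 h2]]; rewrite hkj in h1 h2; rewrite h1 h2 in hck hee.
    by split; [rewrite hck | apply: Hbip].
  split; first by rewrite [LHS]mulrC hck [z' (s (p j)) * _]mulrC.
  by rewrite eq_sym; apply: Hbip.
have hc0 : c != 0.
  apply/eqP => h0; move: huw; rewrite h0 mul0r => /eqP.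
  by rewrite mulf_eq0 (negbTE (hz _)) (negbTE (hz _)).
have hr0 : z a0 / z' a0 != 0 by rewrite mulf_neq0 ?invr_eq0.
have hru : z (s j) / z' (s j) = c / (z (s (p j)) / z' (s (p j))).
  have -> : c = z (s j) * z (s (p j)) / (z' (s j) * z' (s (p j))).
    by rewrite huw mulfK // mulf_neq0.
  by field; rewrite !hz !hz'.
rewrite hru IHp; move: hb; case: (s (p j) \in A); case: (s j \in A) => //= _.
by field; rewrite ?hc0 ?hz ?hz'.
Qed.

Lemma tree_proportional (z z' : {ffun 'I_n -> K}) (c : K) :
  (forall v, z v != 0) -> (forall v, z' v != 0) ->
  (forall k : 'I_N3, edge_map e z (tr k) = c * edge_map e z' (tr k)) ->
  forall k, edge_map e z k = c * edge_map e z' k.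
Proof.
move=> hz hz' hc k; rewrite !edge_mapAB.
have := tree_ratio hz hz' hc (edge_A k); have := tree_ratio hz hz' hc (edge_B k).
rewrite edge_A_in (negbTE (edge_B_notin k)) => hb ha.
have hr0 : z a0 / z' a0 != 0 by rewrite mulf_neq0 ?invr_eq0.
rewrite -(divfK (hz' (edge_A k)) (z (edge_A k))) -(divfK (hz' (edge_B k)) (z (edge_B k))).
by rewrite ha hb; field; rewrite ?hr0 ?hz ?hz'.
Qed.

Lemma toric_set_torus P : P \in X -> P \in torus K (nedges e).
Proof.
case/imsetP => z hz ->; apply: proj_norm_torus; first exact: nedges_gt0.
by apply: edge_map_neq0 => v; apply: torus_neq0 hz.
Qed.

Lemma toric_set_normalized : normalized X.
Proof. by move=> P /toric_set_torus; apply: torus_firstc. Qed.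

Definition edge_point x y := proj_norm (edge_map e (glue x y)).

Lemma edge_point_toric x y : x \in T1 -> y \in T2 -> edge_point x y \in X.
Proof.
move=> hx hy; have hz v := glue_neq0 v hx hy.
apply/imsetP; exists (proj_norm (glue x y)); first exact: proj_norm_torus n_gt0 hz.
have hf : (firstc (glue x y))^-1 ^+ 2 != 0 by rewrite expf_neq0 // invr_eq0 firstc_neq0 // n_gt0.
by rewrite /edge_point [edge_map e (proj_norm _)]edge_map_scale proj_norm_scale.
Qed.

Lemma edge_point_inj x y x' y' : x \in T1 -> y \in T2 -> x' \in T1 -> y' \in T2 ->
  edge_point x y = edge_point x' y' -> x = x' /\ y = y'.
Proof.
move=> hx hy hx' hy' h.
have hz v := glue_neq0 v hx hy; have hz' v := glue_neq0 v hx' hy'.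
have hf := firstc_neq0 nedges_gt0 (edge_map_neq0 hz).
have hf' := firstc_neq0 nedges_gt0 (edge_map_neq0 hz').
have hk := proj_norm_eq_scale h hf hf'.
have ha := tree_ratio hz hz' (fun k => hk (tr k)).
have [h1 h2] := glue_a0_b0 hx hy; have [h1' h2'] := glue_a0_b0 hx' hy'.
have := ha b0; have := b0_in; rewrite inE => /negbTE ->.
rewrite h1 h1' h2 h2' !divr1 => hc1.
have hall v : glue x y v = glue x' y' v.
  rewrite -[LHS](divfK (hz' v)) ha h1 h1' divr1 -hc1.
  by case: ifP => _; rewrite ?divr1 ?divff ?mul1r // oner_eq0.
by split; apply/ffunP => i; rewrite -(glue_enumA x y, glue_enumB x y) hall
  (glue_enumA, glue_enumB).
Qed.

Lemma toric_edge_point P : P \in X ->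
  exists x y, [/\ x \in T1, y \in T2 & P = edge_point x y].
Proof.
case/imsetP => z hz ->; have hzn v : z v != 0 by apply: torus_neq0 hz.
pose za : {ffun 'I_#|A| -> K} := [ffun i => z (enum_val i)].
pose zb : {ffun 'I_#|~: A| -> K} := [ffun i => z (enum_val i)].
have hza i : za i != 0 by rewrite ffunE.
have hzb i : zb i != 0 by rewrite ffunE.
have hfa := firstc_neq0 hA hza; have hfb := firstc_neq0 hB hzb.
exists (proj_norm za), (proj_norm zb).
split; [exact: proj_norm_torus | exact: proj_norm_torus |].
have glueE v : glue (proj_norm za) (proj_norm zb) v =
    z v * (if v \in A then (firstc za)^-1 else (firstc zb)^-1).
  case: (boolP (v \in A)) => hv.
    by rewrite glueA // proj_normE ffunE enum_rankK_in.
  by rewrite glueB // proj_normE ffunE /rankB enum_rankK_in // inE.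
have hc : (firstc za)^-1 * (firstc zb)^-1 != 0 by rewrite mulf_neq0 // invr_eq0.
rewrite /edge_point (_ : edge_map e (glue _ _) =
    [ffun k => edge_map e z k * ((firstc za)^-1 * (firstc zb)^-1)]).
  by rewrite proj_norm_scale.
apply/ffunP => k; rewrite [RHS]ffunE !edge_mapAB !glueE edge_A_in.
by rewrite (negbTE (edge_B_notin k)) mulrACA.
Qed.

Lemma card_toric_ge : (#|T1| * #|T2| <= #|X|)%N.
Proof.
rewrite -cardsX -(@card_in_imset _ _ (fun xy => edge_point xy.1 xy.2)).
  apply/subset_leq_card/subsetP => P /imsetP [[x y]].
  by rewrite in_setX => /andP [hx hy] ->; apply: edge_point_toric.
move=> [x y] [x' y']; rewrite !in_setX => /andP [hx hy] /andP [hx' hy'] /= h.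
by have [-> ->] := edge_point_inj hx hy hx' hy' h.
Qed.

Definition tree_proj (P : {ffun 'I_(nedges e) -> K}) : {ffun 'I_N3 -> K} :=
  proj_norm [ffun k : 'I_N3 => P (tr k)].

Lemma tree_proj_torus P : P \in X -> tree_proj P \in T3.
Proof.
move/toric_set_torus => hP; apply: proj_norm_torus N3_gt0 _ => k.
by rewrite ffunE torus_neq0.
Qed.

Lemma tree_proj_inj : {in X &, injective tree_proj}.
Proof.
move=> _ _ /imsetP [z hz ->] /imsetP [z' hz' ->] h.
have hzn v : z v != 0 by apply: torus_neq0 hz.
have hzn' v : z' v != 0 by apply: torus_neq0 hz'.
have hw k : edge_map e z k != 0 := edge_map_neq0 hzn k.
have hw' k : edge_map e z' k != 0 := edge_map_neq0 hzn' k.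
have hfw := firstc_neq0 nedges_gt0 hw; have hfw' := firstc_neq0 nedges_gt0 hw'.
set wP := [ffun k : 'I_N3 => proj_norm (edge_map e z) (tr k)] in h.
set wP' := [ffun k : 'I_N3 => proj_norm (edge_map e z') (tr k)] in h.
have hfP : firstc wP != 0.
  by apply: firstc_neq0 N3_gt0 _ => k; rewrite ffunE proj_norm_neq0 // nedges_gt0.
have hfP' : firstc wP' != 0.
  by apply: firstc_neq0 N3_gt0 _ => k; rewrite ffunE proj_norm_neq0 // nedges_gt0.
have hk := proj_norm_eq_scale h hfP hfP'.
set c1 := firstc wP / firstc wP' in hk.
have htrk (k : 'I_N3) : edge_map e z (tr k) =
    (c1 * firstc (edge_map e z) / firstc (edge_map e z')) * edge_map e z' (tr k).
  have := hk k; rewrite [LHS]ffunE [in RHS]ffunE !proj_normE => hk'.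
  by rewrite -[edge_map e z (tr k)](divfK hfw) hk'; field; rewrite hfw'.
have hall := tree_proportional hzn hzn' htrk.
set c2 := c1 * _ / _ in hall.
have hc2 : c2 != 0.
  by apply: contraNneq (hw (tr (Ordinal N3_gt0))) => c0; rewrite hall c0 mul0r.
have -> : edge_map e z = [ffun k => edge_map e z' k * c2].
  by apply/ffunP => k; rewrite [RHS]ffunE hall mulrC.
by rewrite proj_norm_scale.
Qed.

Definition coord_at N (Q : {ffun 'I_N -> K}) (m : nat) : K :=
  if @insub nat (fun k => (k < N)%N) 'I_N m is Some i then Q i else 0.

Lemma coord_atE N (Q : {ffun 'I_N -> K}) m (h : (m < N)%N) :
  coord_at Q m = Q (Ordinal h).
Proof.
rewrite /coord_at; case: insubP => [i _ hi|]; last by rewrite h.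
by congr (Q _); apply: val_inj.
Qed.

Definition split_fst (Q : {ffun 'I_N3 -> K}) : {ffun 'I_#|A| -> K} :=
  [ffun i : 'I_#|A| => coord_at Q i].
Definition split_snd (Q : {ffun 'I_N3 -> K}) : {ffun 'I_#|~: A| -> K} :=
  [ffun j : 'I_#|~: A| => if val j == 0%N then 1 else coord_at Q (#|A|.-1 + j)].

Lemma split_torus Q : Q \in T3 -> split_fst Q \in T1 /\ split_snd Q \in T2.
Proof.
move=> hQ; split; rewrite inE; apply/andP; split.
- apply/forallP => i; rewrite ffunE.
  have hi : (i < N3)%N by have := ltn_ord i; lia.
  by rewrite (coord_atE _ hi) torus_neq0.
- rewrite (@firstcE _ _ _ (Ordinal hA)) // ffunE /= (coord_atE _ N3_gt0).
  by rewrite -(@firstcE _ _ _ (Ordinal N3_gt0)) // torus_firstc.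
- apply/forallP => j; rewrite ffunE; case: ifP => [_|hj]; first by rewrite oner_eq0.
  have hi : (#|A|.-1 + j < N3)%N by have := ltn_ord j; lia.
  by rewrite (coord_atE _ hi) torus_neq0.
- by rewrite (@firstcE _ _ _ (Ordinal hB)) // ffunE /=.
Qed.

Lemma split_inj Q Q' : split_fst Q = split_fst Q' -> split_snd Q = split_snd Q' -> Q = Q'.
Proof.
move=> h1 h2; apply/ffunP => k; case: (ltnP k #|A|) => hk.
  have := congr1 (fun f : {ffun _ -> K} => f (Ordinal hk)) h1; rewrite /= !ffunE.
  by rewrite !(coord_atE _ (ltn_ord k)) /=; congr (_ = _); congr (_ _); apply: val_inj.
have hj : ((k - #|A|.-1)%N < #|~: A|)%N by have := ltn_ord k; lia.
have := congr1 (fun f : {ffun _ -> K} => f (Ordinal hj)) h2; rewrite /= !ffunE /=.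
have -> : ((k - #|A|.-1)%N == 0%N) = false by apply/eqP; lia.
have -> : (#|A|.-1 + (k - #|A|.-1) = k)%N by lia.
by rewrite !(coord_atE _ (ltn_ord k)) (_ : Ordinal (ltn_ord k) = k) //; apply: val_inj.
Qed.

Lemma card_torus_split_le : (#|T3| <= #|T1| * #|T2|)%N.
Proof.
rewrite -cardsX -(@card_in_imset _ _ (fun Q => (split_fst Q, split_snd Q)) T3).
  apply/subset_leq_card/subsetP => _ /imsetP [Q hQ ->].
  by have [h1 h2] := split_torus hQ; rewrite in_setX h1 h2.
by move=> Q Q' _ _ [h1 h2]; apply: split_inj.
Qed.

Lemma tree_proj_toric : tree_proj @: X = T3.
Proof.
apply/eqP; rewrite eqEcard; apply/andP; split.
  by apply/subsetP => Q /imsetP [P hP ->]; apply: tree_proj_torus.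
by rewrite (card_in_imset tree_proj_inj) (leq_trans card_torus_split_le card_toric_ge).
Qed.

Lemma delta_toric_le_torus d : (delta X d <= delta T3 d)%N.
Proof.
apply: delta_ge_nzset; first exact: torus_normalized.
  by apply: leq_trans (delta_le_card _ _) _; rewrite -tree_proj_toric (card_in_imset tree_proj_inj).
move=> F3 hF3 /card_gt0P [Q hQ].
pose F := F3 \mPo [tuple (fun _ => 1) k *: 'X_(tr k) | k < N3].
have hF : F \is d.-homog by apply: homog_comp_scaledX.
have hFP P : P \in X ->
    (meval (fun i => P i) F != 0) = (meval (fun k => tree_proj P k) F3 != 0).
  move=> hP; rewrite meval_comp_scaledX /tree_proj (meval_proj_norm_neq0 hF3).
    by congr (_ != _); apply: meval_eq => k; rewrite ffunE mul1r.
  by apply: firstc_neq0 N3_gt0 _ => k; rewrite ffunE torus_neq0 // toric_set_torus.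
apply: (@leq_trans #|nzset X F|).
  apply: delta_le_nzset toric_set_normalized hF _.
  move: hQ; rewrite nzsetP -tree_proj_toric => /andP [/imsetP [P hP ->] hQF].
  by apply/card_gt0P; exists P; rewrite nzsetP hP hFP.
have hsub : {subset nzset X F <= X} by move=> P; rewrite nzsetP => /andP [].
rewrite -(@card_in_imset _ _ tree_proj); last by move=> P P' /hsub hP /hsub; apply: tree_proj_inj.
apply/subset_leq_card/subsetP => _ /imsetP [P hP ->].
by move: hP; rewrite !nzsetP => /andP [hPX hPF]; rewrite tree_proj_torus //= -hFP.
Qed.

Definition bi_eval (F : {mpoly K[nedges e]}) x y :=
  meval (fun k => edge_map e (glue x y) k) F.

Definition form_in_y (F : {mpoly K[nedges e]}) (x : {ffun 'I_#|A| -> K}) :=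
  F \mPo [tuple x (rankA (edge_A k)) *: 'X_(rankB (edge_B k)) | k < nedges e].

Definition form_in_x (F : {mpoly K[nedges e]}) (y : {ffun 'I_#|~: A| -> K}) :=
  F \mPo [tuple y (rankB (edge_B k)) *: 'X_(rankA (edge_A k)) | k < nedges e].

Lemma meval_form_in_y F (x : {ffun 'I_#|A| -> K}) (y : {ffun 'I_#|~: A| -> K}) :
  meval (fun j => y j) (form_in_y F x) = bi_eval F x y.
Proof.
rewrite meval_comp_scaledX; apply: meval_eq => k.
by rewrite edge_mapAB glueA ?edge_A_in // glueB ?edge_B_notin.
Qed.

Lemma meval_form_in_x F (x : {ffun 'I_#|A| -> K}) (y : {ffun 'I_#|~: A| -> K}) :
  meval (fun j => x j) (form_in_x F y) = bi_eval F x y.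
Proof.
rewrite meval_comp_scaledX; apply: meval_eq => k.
by rewrite edge_mapAB glueA ?edge_A_in // glueB ?edge_B_notin // mulrC.
Qed.

Lemma edge_point_meval_neq0 d F x y : F \is d.-homog -> x \in T1 -> y \in T2 ->
  (meval (fun k => edge_point x y k) F != 0) = (bi_eval F x y != 0).
Proof.
move=> hF hx hy; apply: meval_proj_norm_neq0 hF _.
by apply: firstc_neq0 nedges_gt0 _; apply: edge_map_neq0 => v; apply: glue_neq0.
Qed.

Lemma delta_toric_ge_prod d : (delta T1 d * delta T2 d <= delta X d)%N.
Proof.
apply: delta_ge_nzset; first exact: toric_set_normalized.
  by apply: leq_trans card_toric_ge; apply: leq_mul; apply: delta_le_card.
move=> F hF /card_gt0P [P]; rewrite nzsetP => /andP [hPX hPF].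
have [x0 [y0 [hx0 hy0 hP]]] := toric_edge_point hPX.
rewrite hP (edge_point_meval_neq0 hF) // in hPF.
pose S1 y := nzset T1 (form_in_x F y).
have hS2 : (delta T2 d <= #|nzset T2 (form_in_y F x0)|)%N.
  apply: delta_le_nzset (@torus_normalized _ _) (homog_comp_scaledX _ _ hF) _.
  by apply/card_gt0P; exists y0; rewrite nzsetP hy0 meval_form_in_y.
have hS1 y : y \in nzset T2 (form_in_y F x0) -> (delta T1 d <= #|S1 y|)%N.
  rewrite nzsetP => /andP [hy hgy].
  apply: delta_le_nzset (@torus_normalized _ _) (homog_comp_scaledX _ _ hF) _.
  by apply/card_gt0P; exists x0; rewrite nzsetP hx0 meval_form_in_x -meval_form_in_y.
apply: leq_trans (card_dep_pairs_ge hS2 hS1) _.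
rewrite -(@card_in_imset _ _ (fun yx => edge_point yx.2 yx.1)); last first.
  move=> [y x] [y' x']; rewrite inE /= !nzsetP => /andP [/andP [hy _] /andP [hx _]].
  rewrite inE /= !nzsetP => /andP [/andP [hy' _] /andP [hx' _]] /= h.
  by have [-> ->] := edge_point_inj hx hy hx' hy' h.
apply/subset_leq_card/subsetP => Q /imsetP [[y x]]; rewrite inE /= !nzsetP.
case/andP => /andP [hy _] /andP [hx hxF] ->.
by rewrite edge_point_toric //= (edge_point_meval_neq0 hF) // -meval_form_in_x.
Qed.

End BipartiteToricSet.

Theorem theorem4p4 (K : finFieldType) (n : nat) (e : rel 'I_n) (A : {set 'I_n}) :
  simple_graph e -> connected_graph e -> bipartition e A ->
  (1 <= #|A|)%N -> (1 <= #|~: A|)%N ->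
  forall d : nat, (1 <= d)%N ->
    (delta (torus K #|A|) d * delta (torus K #|~: A|) d
       <= delta (toric_set K e) d)%N /\
    (delta (toric_set K e) d <= delta (torus K (#|A| + #|~: A| - 1)) d)%N.
Proof.
move=> He Hconn Hbip hA hB d _.
have [s [p [tr [hs0 hcov hp htr]]]] :=
  spanning_tree He Hconn (a0 hA) (N3_pred A) (n_gt0 hA).
split.
- exact: (delta_toric_ge_prod K Hbip hB hs0 hcov hp htr d).
- exact: (delta_toric_le_torus K Hbip hB hs0 hcov hp htr d).
Qed.
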